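(* Let $(A,\circ_A)$ be a Leibniz algebra, $(l,r,V)$ a representation of it, and $T:V\to A$ an anti-$\mathcal O$-operator of $(A,\circ_A)$ associated to $(l,r,V)$. Define multiplications on $V$ by $u\succ_V v=-l(Tu)v$ and $u\prec_V v=-r(Tv)u$, and set $u\circ_V v=u\succ_V v+u\prec_V v$. Then: (a) $(V,\succ_V,\prec_V)$ satisfies (AL2), (AL3), (AL4); (b) $(V,\succ_V,\prec_V)$ is an anti-pre-Leibniz algebra (equivalently, $(V,\circ_V)$ is a Leibniz algebra) if and only if $T$ is strong; (c) in this case $T$ is a homomorphism of Leibniz algebras from $(V,\circ_V)$ to $(A,\circ_A)$, there is a well-defined anti-pre-Leibniz algebra structure on $T(V)=\{Tu\mid u\in V\}\subseteq A$ given by $(Tu)\succ_A(Tv)=T(u\succ_V v)$, $(Tu)\prec_A(Tv)=T(u\prec_V v)$, and $T:V\to T(V)$ is a homomorphism of anti-pre-Leibniz algebras.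
   Context: All vector spaces are finite-dimensional over a field $\mathbb K$ of characteristic zero. A Leibniz algebra is a vector space $A$ with a multiplication $\circ_A$ satisfying $x\circ_A(y\circ_A z)=(x\circ_A y)\circ_A z+y\circ_A(x\circ_A z)$. A representation of $(A,\circ_A)$ is a triple $(l,r,V)$ with linear maps $l,r:A\to\mathrm{End}(V)$ such that for all $x,y\in A,v\in V$: $l(x\circ_A y)v=l(x)l(y)v-l(y)l(x)v$; $r(x\circ_A y)v=l(x)r(y)v-r(y)l(x)v$; $r(y)l(x)v=-r(y)r(x)v$. An anti-$\mathcal O$-operator of $(A,\circ_A)$ associated to $(l,r,V)$ is a linear map $T:V\to A$ with $(Tu)\circ_A(Tv)=-T\big(l(Tu)v+r(Tv)u\big)$ for all $u,v\in V$; it is strong if moreover $l\big((Tu)\circ_A(Tv)\big)w+r\big((Tu)\circ_A(Tw)\big)v-r\big((Tv)\circ_A(Tw)\big)u=0$ for all $u,v,w\in V$. An anti-pre-Leibniz algebra is a vector space $A$ with multiplications $\succ_A,\prec_A$ such that, with $x\circ_A y=x\succ_A y+x\prec_A y$, for all $x,y,z$: (AL1) $(x\circ_A y)\prec_A z=x\succ_A(y\circ_A z)-y\succ_A(x\circ_A z)$; (AL2) $(x\circ_A y)\succ_A z=y\succ_A(x\succ_A z)-x\succ_A(y\succ_A z)$; (AL3) $x\prec_A(y\circ_A z)=(y\succ_A x)\prec_A z-y\succ_A(x\prec_A z)$; (AL4) $(x\succ_A y)\prec_A z=-(y\prec_A x)\prec_A z$. A homomorphism of anti-pre-Leibniz algebras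 is a linear map preserving both multiplications. *)

From HB Require Import structures.
From mathcomp Require Import all_boot all_order all_algebra.
Set Implicit Arguments. Unset Strict Implicit. Unset Printing Implicit Defensive.
Import GRing.Theory.
Local Open Scope ring_scope.

Section Defs.
Variable K : fieldType.

Definition lin_map (U W : lmodType K) (f : U -> W) : Prop :=
  forall (a : K) (x y : U), f (a *: x + y) = a *: f x + f y.

Definition bilinear_mul (A : lmodType K) (m : A -> A -> A) : Prop :=
  (forall x, lin_map (m x)) /\ (forall y, lin_map (fun x => m x y)).

Definition leibniz_id (A : lmodType K) (m : A -> A -> A) : Prop :=
  forall x y z, m x (m y z) = m (m x y) z + m y (m x z).

Definition leibniz_algebra (A : lmodType K) (m : A -> A -> A) : Prop :=
  bilinear_mul m /\ leibniz_id m.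

Definition lin_op (A V : lmodType K) (f : A -> V -> V) : Prop :=
  forall (a : K) (x y : A) (v : V), f (a *: x + y) v = a *: f x v + f y v.

Definition leibniz_rep (A V : lmodType K) (m : A -> A -> A)
  (l r : A -> V -> V) : Prop :=
  [/\ lin_op l, lin_op r,
      (forall x, lin_map (l x)) & (forall x, lin_map (r x))] /\
  [/\ (forall x y v, l (m x y) v = l x (l y v) - l y (l x v)),
      (forall x y v, r (m x y) v = l x (r y v) - r y (l x v)) &
      (forall x y v, r y (l x v) = - r y (r x v))].

Definition anti_O_op (A V : lmodType K) (m : A -> A -> A)
  (l r : A -> V -> V) (T : V -> A) : Prop :=
  forall u v, m (T u) (T v) = - T (l (T u) v + r (T v) u).

Definition strong_anti_O_op (A V : lmodType K) (m : A -> A -> A)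
  (l r : A -> V -> V) (T : V -> A) : Prop :=
  anti_O_op m l r T /\
  forall u v w, l (m (T u) (T v)) w + r (m (T u) (T w)) v
                - r (m (T v) (T w)) u = 0.

Section APL.
Variables (A : lmodType K) (succ prec : A -> A -> A).
Let circ x y := succ x y + prec x y.
Definition AL1 : Prop := forall x y z,
  prec (circ x y) z = succ x (circ y z) - succ y (circ x z).
Definition AL2 : Prop := forall x y z,
  succ (circ x y) z = succ y (succ x z) - succ x (succ y z).
Definition AL3 : Prop := forall x y z,
  prec x (circ y z) = prec (succ y x) z - succ y (prec x z).
Definition AL4 : Prop := forall x y z,
  prec (succ x y) z = - prec (prec y x) z.
Definition anti_pre_leibniz : Prop :=
  [/\ bilinear_mul succ, bilinear_mul prec, AL1, AL2 & AL3] /\ AL4.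
End APL.

Definition circ_of (A : lmodType K) (succ prec : A -> A -> A) x y :=
  succ x y + prec x y.

Definition succV (A V : lmodType K) (l : A -> V -> V) (T : V -> A) (u v : V) : V :=
  - l (T u) v.
Definition precV (A V : lmodType K) (r : A -> V -> V) (T : V -> A) (u v : V) : V :=
  - r (T v) u.

End Defs.

(* Unfolding the induced products, AL2-AL4 on V are the three axioms of the
   representation transported along T, because T (u o_V v) = Tu o_A Tv.  The
   AL1 defect on V is exactly the expression whose vanishing makes T strong,
   and for any products satisfying AL2-AL4 the Leibniz defect of o is twice
   the AL1 defect, which gives (b) in characteristic 0.  For (c), ker T is
   stable under both induced products, so they descend to T(V), and the
   anti-pre-Leibniz axioms pass to surjective linear homomorphic images. *)

From HB Require Import structures.
From mathcomp Require Import all_boot all_order all_algebra.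
Import GRing.Theory.
Local Open Scope ring_scope.

Section LinMap.
Context {K : fieldType} {U W : lmodType K} {f : U -> W}.
Hypothesis f_lin : lin_map f.

Lemma lin_mapD x y : f (x + y) = f x + f y.
Proof. by have := f_lin 1 x y; rewrite !scale1r. Qed.

Lemma lin_map0 : f 0 = 0.
Proof. by apply: (@addrI _ (f 0)); rewrite -lin_mapD !addr0. Qed.

Lemma lin_mapN x : f (- x) = - f x.
Proof. by apply/esym/addr0_eq; rewrite -lin_mapD subrr lin_map0. Qed.

Lemma lin_mapB x y : f (x - y) = f x - f y.
Proof. by rewrite lin_mapD lin_mapN. Qed.

Lemma lin_mapZ a x : f (a *: x) = a *: f x.
Proof. by have := f_lin a x 0; rewrite !addr0 lin_map0 addr0. Qed.

End LinMap.

Definition compatible_mul {V W : Type} (f : V -> W) (m : V -> V -> V) : Prop :=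
  forall u u' v v', f u = f u' -> f v = f v' -> f (m u v) = f (m u' v').

Section AntiPreLeibniz.
Context {K : fieldType} {A : lmodType K} {s p : A -> A -> A}.
Local Notation c := (circ_of s p).

Lemma bilinear_circ : bilinear_mul s -> bilinear_mul p -> bilinear_mul c.
Proof.
case=> sl sr [pl pr]; split=> [x a u v | y a u v]; rewrite /circ_of.
  by rewrite sl pl scalerDr addrACA.
by rewrite (sr y) (pr y) scalerDr addrACA.
Qed.

Lemma anti_pre_leibnizE : bilinear_mul s -> bilinear_mul p ->
  AL2 s p -> AL3 s p -> AL4 s p -> anti_pre_leibniz s p <-> AL1 s p.
Proof. by move=> *; split=> [[[]]|] //. Qed.

(* Expanding [c] once and using AL2, AL3 (twice) and AL4, the terms outside
   the AL1 defect reassemble into a second copy of it. *)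
Lemma leibniz_defect_circ : bilinear_mul s -> bilinear_mul p ->
  AL2 s p -> AL3 s p -> AL4 s p -> forall x y z,
  c x (c y z) - (c (c x y) z + c y (c x z))
  = (s x (c y z) - s y (c x z) - p (c x y) z) *+ 2.
Proof.
move=> [s_lin _] [_ p_lin] hAL2 hAL3 hAL4 x y z.
have cE a b : c a b = s a b + p a b by [].
have E : p x (c y z) - (s (c x y) z + p y (c x z))
         = s x (c y z) - s y (c x z) - p (c x y) z.
  rewrite hAL2 !hAL3 hAL4 ![c _ _ in RHS]cE !(lin_mapD (s_lin _)).
  have pD a b : p (a + b) z = p a z + p b z by exact: (lin_mapD (p_lin z) a b).
  rewrite pD !(opprD, opprB, opprK, addrA).
  by rewrite [LHS](ACl (4*6*3*2*5*1)%AC).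
rewrite (cE x) (cE (c x y)) (cE y (c x z)) mulr2n -{2}E.
rewrite !(opprD, opprB, opprK, addrA).
by rewrite [LHS](ACl (1*5*4*2*3*6)%AC).
Qed.

Lemma leibniz_circ_iff_AL1 : (2%:R : K) != 0 -> bilinear_mul s -> bilinear_mul p ->
  AL2 s p -> AL3 s p -> AL4 s p -> leibniz_algebra c <-> AL1 s p.
Proof.
move=> two_neq0 hs hp hAL2 hAL3 hAL4; split=> [[_ hL] | hAL1].
  rewrite /AL1 /= => x y z; have := leibniz_defect_circ hs hp hAL2 hAL3 hAL4 x y z.
  rewrite hL subrr -scaler_nat => /esym/eqP.
  by rewrite scaler_eq0 (negbTE two_neq0) subr_eq0 => /eqP.
split=> [|x y z]; first exact: bilinear_circ.
by apply/eqP; rewrite -subr_eq0 leibniz_defect_circ // hAL1 subrr mul0rn.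
Qed.

End AntiPreLeibniz.

Section SurjectiveImage.
Context {K : fieldType} {V W : lmodType K} {f : V -> W}.
Hypotheses (f_lin : lin_map f) (f_surj : forall w, exists v, f v = w).

Let fD u v : f u + f v = f (u + v). Proof. by rewrite (lin_mapD f_lin). Qed.
Let fN u : - f u = f (- u). Proof. by rewrite (lin_mapN f_lin). Qed.
Let fZ a u : a *: f u = f (a *: u). Proof. by rewrite (lin_mapZ f_lin). Qed.

Lemma bilinear_mul_image {m : V -> V -> V} {m' : W -> W -> W} :
  (forall u v, m' (f u) (f v) = f (m u v)) -> bilinear_mul m -> bilinear_mul m'.
Proof.
move=> fm [ml mr]; split=> x a u v /=;
  case: (f_surj x) (f_surj u) (f_surj v) => [x' <-] [u' <-] [v' <-].
  by rewrite !(fm, fD, fZ) ml.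
by rewrite !(fm, fD, fZ) (mr x').
Qed.

Lemma anti_pre_leibniz_image {s p : V -> V -> V} {s' p' : W -> W -> W} :
  (forall u v, s' (f u) (f v) = f (s u v)) ->
  (forall u v, p' (f u) (f v) = f (p u v)) ->
  anti_pre_leibniz s p -> anti_pre_leibniz s' p'.
Proof.
move=> fs fp [[bs bp h1 h2 h3] h4].
split; [split; [exact: bilinear_mul_image bs | exact: bilinear_mul_image bp | | |] |];
  rewrite /AL1 /AL2 /AL3 /AL4 /= => x y z;
  case: (f_surj x) (f_surj y) (f_surj z) => [x' <-] [y' <-] [z' <-];
  rewrite !(fs, fp, fD, fN); congr f; [exact: h1 | exact: h2 | exact: h3 | exact: h4].
Qed.

End SurjectiveImage.

Section Corestriction.
Context {K : fieldType} {V W : vectType K} (T : 'Hom(V, W)).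

Definition corestr (u : V) : subvs_of (limg T) := vsproj (limg T) (T u).

Definition image_mul (m : V -> V -> V) (a b : subvs_of (limg T)) :=
  corestr (m ((T^-1)%VF (vsval a)) ((T^-1)%VF (vsval b))).

Let T_in_limg u : T u \in limg T. Proof. exact/memv_img/memvf. Qed.

Lemma corestr_lin : lin_map corestr.
Proof. by move=> a u v; rewrite /corestr !linearP. Qed.

Lemma corestr_surj a : exists u, corestr u = a.
Proof.
by exists ((T^-1)%VF (vsval a)); rewrite /corestr limg_lfunVK ?subvsP // vsvalK.
Qed.

Lemma image_mulE {m : V -> V -> V} : compatible_mul T m ->
  forall u v, image_mul m (corestr u) (corestr v) = corestr (m u v).
Proof.
move=> hm u v; rewrite /image_mul /corestr; congr vsproj.
by apply: hm; rewrite vsprojK ?limg_lfunVK.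
Qed.

End Corestriction.

Section InducedOperations.
Context {K : fieldType} {A V : lmodType K} {mA : A -> A -> A} {l r : A -> V -> V}.
Context {T : {linear V -> A}}.
Hypotheses (hrep : leibniz_rep mA l r) (hT : anti_O_op mA l r T).
Local Notation sV := (succV l T).
Local Notation pV := (precV r T).
Local Notation cV := (circ_of sV pV).

Let l_lin x : lin_map (l x). Proof. by case: hrep => -[]. Qed.
Let r_lin x : lin_map (r x). Proof. by case: hrep => -[]. Qed.
Let l_linl v : lin_map (l^~ v). Proof. by case: hrep => -[hl *] a x y; apply: hl. Qed.
Let r_linl v : lin_map (r^~ v). Proof. by case: hrep => -[_ hr *] a x y; apply: hr. Qed.
Let l_mul x y v : l (mA x y) v = l x (l y v) - l y (l x v).
Proof. by case: hrep => _ []. Qed.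
Let r_mul x y v : r (mA x y) v = l x (r y v) - r y (l x v).
Proof. by case: hrep => _ []. Qed.
Let r_l x y v : r y (l x v) = - r y (r x v).
Proof. by case: hrep => _ []. Qed.

Lemma T_circV u v : T (cV u v) = mA (T u) (T v).
Proof. by rewrite hT /circ_of /succV /precV -opprD linearN. Qed.

Lemma bilinear_succV : bilinear_mul sV.
Proof.
split=> [x a u v | y a u v]; rewrite /succV.
  by rewrite (l_lin _) opprD scalerN.
by rewrite linearP (lin_mapD (l_linl _)) (lin_mapZ (l_linl _)) opprD scalerN.
Qed.

Lemma bilinear_precV : bilinear_mul pV.
Proof.
split=> [x a u v | y a u v]; rewrite /precV.
  by rewrite linearP (lin_mapD (r_linl _)) (lin_mapZ (r_linl _)) opprD scalerN.
by rewrite (r_lin _) opprD scalerN.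
Qed.

Lemma AL2_induced : AL2 sV pV.
Proof.
by rewrite /AL2 /= => x y z; rewrite /succV T_circV l_mul !(lin_mapN (l_lin _)) !opprK opprB.
Qed.

Lemma AL3_induced : AL3 sV pV.
Proof.
rewrite /AL3 /= => x y z; rewrite /succV /precV T_circV r_mul.
by rewrite (lin_mapN (l_lin _)) !(lin_mapN (r_lin _)) !opprK opprB.
Qed.

Lemma AL4_induced : AL4 sV pV.
Proof. by move=> x y z; rewrite /succV /precV !(lin_mapN (r_lin _)) !opprK r_l. Qed.

Lemma AL1_defect_induced x y z :
  sV x (cV y z) - sV y (cV x z) - pV (cV x y) z
  = l (mA (T x) (T y)) z + r (mA (T x) (T z)) y - r (mA (T y) (T z)) x.
Proof.
rewrite /circ_of /succV /precV l_mul !r_mul (r_l (T y)).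
rewrite !(lin_mapD (l_lin _), lin_mapN (l_lin _), lin_mapD (r_lin _), lin_mapN (r_lin _)).
rewrite !(opprD, opprB, opprK, addrA).
by rewrite [LHS](ACl (1*3*2*5*4*6)%AC).
Qed.

Lemma AL1_induced_iff_strong : AL1 sV pV <-> strong_anti_O_op mA l r T.
Proof.
split=> [hAL1 | [_ hS]]; last rewrite /AL1 /= => x y z.
  by split=> // u v w; rewrite -AL1_defect_induced hAL1 subrr.
by apply/eqP; rewrite eq_sym -subr_eq0 AL1_defect_induced hS.
Qed.

Hypothesis hA : bilinear_mul mA.

Lemma T_l_ker u w : T w = 0 -> T (l (T u) w) = 0.
Proof.
move=> Tw; have := hT u w; case: hA => mA_linr _.
rewrite Tw (lin_map0 (mA_linr _)) (lin_map0 (r_linl u)) addr0 => /esym/eqP.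
by rewrite oppr_eq0 => /eqP.
Qed.

Lemma T_r_ker v w : T w = 0 -> T (r (T v) w) = 0.
Proof.
move=> Tw; have := hT w v; case: hA => _ mA_linl.
rewrite Tw (lin_map0 (mA_linl _)) (lin_map0 (l_linl v)) add0r => /esym/eqP.
by rewrite oppr_eq0 => /eqP.
Qed.

Lemma succV_compatible : compatible_mul T sV.
Proof.
move=> u u' v v' eu ev; rewrite /succV eu !linearN; congr (- _).
apply/eqP; rewrite -subr_eq0 -linearB -(lin_mapB (l_lin _)); apply/eqP/T_l_ker.
by rewrite linearB ev subrr.
Qed.

Lemma precV_compatible : compatible_mul T pV.
Proof.
move=> u u' v v' eu ev; rewrite /precV ev !linearN; congr (- _).
apply/eqP; rewrite -subr_eq0 -linearB -(lin_mapB (r_lin _)); apply/eqP/T_r_ker.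
by rewrite linearB eu subrr.
Qed.

End InducedOperations.

Theorem proposition2p9 (K : fieldType) (hchar : [pchar K] =i pred0)
  (A V : vectType K) (mA : A -> A -> A) (l r : A -> V -> V) (T : 'Hom(V, A))
  (hA : leibniz_algebra mA) (hrep : leibniz_rep mA l r)
  (hT : anti_O_op mA l r T) :
  let sV := succV l T in
  let pV := precV r T in
  let cV := circ_of sV pV in
  (* (a) *)
  [/\ AL2 sV pV, AL3 sV pV & AL4 sV pV] /\
  (* (b) *)
  (anti_pre_leibniz sV pV <-> strong_anti_O_op mA l r T) /\
  (leibniz_algebra cV <-> strong_anti_O_op mA l r T) /\
  (* (c) *)
  (strong_anti_O_op mA l r T ->
     (forall u v, T (cV u v) = mA (T u) (T v)) /\
     exists (sA pA : subvs_of (limg T) -> subvs_of (limg T) -> subvs_of (limg T)),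
       anti_pre_leibniz sA pA /\
       (forall u v, sA (vsproj (limg T) (T u)) (vsproj (limg T) (T v))
                    = vsproj (limg T) (T (sV u v))) /\
       (forall u v, pA (vsproj (limg T) (T u)) (vsproj (limg T) (T v))
                    = vsproj (limg T) (T (pV u v)))).
Proof.
move=> sV pV cV.
have two_neq0 : (2%:R : K) != 0 by move: (hchar 2); rewrite !inE /= => ->.
have hs : bilinear_mul sV := bilinear_succV hrep.
have hp : bilinear_mul pV := bilinear_precV hrep.
have hAL2 : AL2 sV pV := AL2_induced hrep hT.
have hAL3 : AL3 sV pV := AL3_induced hrep hT.
have hAL4 : AL4 sV pV := AL4_induced hrep.
have AL1_iff_strong := AL1_induced_iff_strong hrep hT.
have apl_iff_strong : anti_pre_leibniz sV pV <-> strong_anti_O_op mA l r T.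
  exact: iff_trans (anti_pre_leibnizE hs hp hAL2 hAL3 hAL4) AL1_iff_strong.
split=> //; split=> //; split.
  exact: iff_trans (leibniz_circ_iff_AL1 two_neq0 hs hp hAL2 hAL3 hAL4) AL1_iff_strong.
move=> strongT; split=> [u v|]; first exact: (T_circV hT u v).
have [hA_bil _] := hA.
have succ_image := image_mulE T (succV_compatible hrep hT hA_bil).
have prec_image := image_mulE T (precV_compatible hrep hT hA_bil).
exists (image_mul T sV), (image_mul T pV); split=> //.
apply: (anti_pre_leibniz_image (corestr_lin T) (corestr_surj T) succ_image prec_image).
exact/apl_iff_strong.
Qed.
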